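(* Let $L\ge2$, $k\ge2$, $\Lambda=\{1,\dots,L\}^2$, $\widetilde\Lambda=\{L\}\times\{1,\dots,L\}$, $\mathbf v=((1,1),(L,1))\in\Lambda^2$, and $W_k=\{\mathbf v\mathbf u:\mathbf u\in\widetilde\Lambda^{k-2}\}\subset\Lambda^k$ (concatenation of strings). Let $\lambda_1,\lambda_2,\dots$ be independent random variables taking values in $\Lambda$, and let $A_m$ be the event $(\lambda_m,\dots,\lambda_{m+k-1})\in W_k$. Then for every finite $I\subset\mathbb{N}$, \[ \mathbb{P}\Bigl[\bigcap_{i\in I}A_i^c\Bigr]\le\prod_{i\in I}\mathbb{P}[A_i^c]. \] *)

From HB Require Import structures.
From mathcomp Require Import all_boot all_order all_algebra.
From mathcomp Require Import all_classical all_reals all_analysis.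
Set Implicit Arguments. Unset Strict Implicit. Unset Printing Implicit Defensive.
Import Order.TTheory GRing.Theory Num.Theory.
Local Open Scope classical_set_scope.
Local Open Scope ereal_scope.

Definition Lam (L : nat) : set (nat * nat) :=
  [set x | (1 <= x.1 <= L)%N /\ (1 <= x.2 <= L)%N].

Definition Lamt (L : nat) : set (nat * nat) :=
  [set x | x.1 = L /\ (1 <= x.2 <= L)%N].

Definition vv (L : nat) : seq (nat * nat) := [:: (1, 1); (L, 1)]%N.

Definition Wk (L k : nat) : set (seq (nat * nat)) :=
  [set s | exists u : seq (nat * nat),
      size u = (k - 2)%N /\ (forall x, x \in u -> Lamt L x) /\ s = vv L ++ u].

Definition Aev (T : Type) (L k : nat) (lam : nat -> T -> nat * nat) (m : nat)
  : set T :=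
  [set w | Wk L k [seq lam (m + j)%N w | j <- iota 0 k]].

Definition mutually_independent_discrete d (T : measurableType d)
  (R : realType) (P : probability T R) (lam : nat -> T -> nat * nat) : Prop :=
  forall (J : seq nat) (a : nat -> nat * nat), uniq J ->
    P (\big[setI/setT]_(j <- J) (lam j @^-1` [set a j]))
    = \prod_(j <- J) P (lam j @^-1` [set a j]).

From HB Require Import structures.
From mathcomp Require Import all_boot all_order all_algebra.
From mathcomp Require Import all_classical all_reals all_analysis.
From mathcomp Require Import zify lra.
Import Order.TTheory GRing.Theory Num.Theory.
Local Open Scope classical_set_scope.
Local Open Scope ring_scope.

(* Sort I decreasingly and remove its largest index m.  The pattern starts with
   the letter (1, 1), which never occurs later in it (its later letters have
   first coordinate L >= 2), so A_m is disjoint from A_i whenever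
   i < m < i + k.  Hence, on A_m, the event B "no A_i, i in I \ {m}" coincides
   with the coarser event B' "no A_i, i in I, i + k <= m", which depends only on
   the coordinates below m and is therefore independent of A_m, a function of
   the coordinates m, ..., m + k - 1.  Thus
     P(A_m^c & B) = P(B) - P(A_m) P(B') <= (1 - P(A_m)) P(B),
   and induction concludes.  Independence of events determined by disjoint
   sets of coordinates is derived from the factorisation of point
   probabilities by conditioning on one coordinate at a time, which is
   possible because the coordinates take finitely many values. *)

Section RealProbability.
Context {d : measure_display} {T : measurableType d} {R : realType}.
Variable P : probability T R.

Definition pr (A : set T) : R := fine (P A).

Lemma prE {A} : measurable A -> P A = (pr A)%:E.
Proof. by move=> mA; rewrite /pr fineK // fin_num_measure. Qed.

Lemma pr_ge0 A : 0 <= pr A.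
Proof. by rewrite /pr fine_ge0 // measure_ge0. Qed.

Lemma pr0 : pr set0 = 0.
Proof. by rewrite /pr measure0. Qed.

Lemma prT : pr setT = 1.
Proof. by rewrite /pr probability_setT. Qed.

Lemma prU A B : measurable A -> measurable B -> A `&` B = set0 ->
  pr (A `|` B) = pr A + pr B.
Proof. by move=> mA mB AB; rewrite /pr measureU // fineD // fin_num_measure. Qed.

Lemma pr_le A B : measurable A -> measurable B -> A `<=` B -> pr A <= pr B.
Proof.
move=> mA mB AB; rewrite -lee_fin -(prE mA) -(prE mB).
by apply: le_measure; rewrite ?inE.
Qed.

Lemma prC A : measurable A -> pr (~` A) = 1 - pr A.
Proof. by move=> mA; rewrite /pr probability_setC // fineB // fin_num_measure. Qed.

Lemma pr_bigsetU (I : eqType) (s : seq I) (F : I -> set T) : uniq s ->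
  (forall i, measurable (F i)) -> (forall i j, i != j -> F i `&` F j = set0) ->
  pr (\big[setU/set0]_(i <- s) F i) = \sum_(i <- s) pr (F i).
Proof.
move=> + mF dF; elim: s => [|i s IH]; first by rewrite !big_nil pr0.
move=> /andP[i_s us]; rewrite !big_cons prU ?IH //.
  exact: bigsetU_measurable.
rewrite big_seq; apply: (big_ind (fun X => F i `&` X = set0)) => [|X Y FX FY|j j_s].
- exact: setI0.
- by rewrite setIUr FX FY setU0.
- by apply: dF; apply: contraNneq i_s => ->.
Qed.

Lemma pr_setCI_le {A B B'} : measurable A -> measurable B -> measurable B' ->
  B `<=` B' -> A `&` B = A `&` B' -> pr (A `&` B') = pr A * pr B' ->
  pr (~` A `&` B) <= pr (~` A) * pr B.
Proof.
move=> mA mB mB' BB' AB AB'.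
have splitB : pr B = pr (A `&` B) + pr (~` A `&` B).
  rewrite -prU; first by rewrite -setIUl setUv setTI.
  - exact: measurableI.
  - by apply: measurableI => //; apply: measurableC.
  - by rewrite setIACA setICr set0I.
have : pr A * pr B <= pr A * pr B' by rewrite ler_wpM2l ?pr_ge0 ?pr_le.
by rewrite prC // mulrBl mul1r; move: splitB; rewrite AB AB'; lra.
Qed.

End RealProbability.

Definition determined_by {V : Type} (J : seq nat) (f : (nat -> V) -> Prop) :=
  forall h h', {in J, h =1 h'} -> f h -> f h'.

Definition path_event {T V : Type} (lam : nat -> T -> V) (f : (nat -> V) -> Prop)
  : set T := [set w | f (lam^~ w)].

Definition atom {T V : Type} (lam : nat -> T -> V) (K : seq nat) (a : nat -> V)
  : set T := \big[setI/setT]_(j <- K) lam j @^-1` [set a j].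

Lemma determined_by_fwith {V : eqType} {j J} x {f : (nat -> V) -> Prop} :
  determined_by (j :: J) f -> determined_by J (fun h => f (fwith j x h)).
Proof.
move=> df h h' hh'; apply: df => i; rewrite inE /=.
by case: eqP => //= _ /hh'.
Qed.

Section FiniteValuedProcess.
Context {d : measure_display} {T : measurableType d} {R : realType}.
Context {P : probability T R} {V : choiceType}.
Context {lam : nat -> T -> V} {vals : seq V}.
Hypothesis lam_vals : forall j w, lam j w \in vals.
Hypothesis measurable_lam : forall j x, measurable (lam j @^-1` [set x]).
Hypothesis lam_indep : forall K a, uniq K ->
  P (atom lam K a) = (\prod_(j <- K) P (lam j @^-1` [set a j]))%E.

Local Notation pr := (pr P).

Lemma measurable_atom K a : measurable (atom lam K a).
Proof. exact: bigsetI_measurable. Qed.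

Lemma setI_coord_path_event j x f :
  lam j @^-1` [set x] `&` path_event lam f =
  lam j @^-1` [set x] `&` path_event lam (fun h => f (fwith j x h)).
Proof.
apply/seteqP; split=> w [/= ljw fw]; split=> //;
  have fwithE : fwith j x (lam^~ w) = lam^~ w :> (nat -> V)
    by apply/funext => i /=; case: eqP => // ->.
- by rewrite /path_event /= fwithE.
- by rewrite /path_event /= fwithE in fw.
Qed.

Lemma atom_fwith K a j x : j \notin K -> atom lam K (fwith j x a) = atom lam K a.
Proof.
move=> jK; apply: eq_big_seq => i iK /=.
by case: eqP => // eij; move: jK; rewrite -eij iK.
Qed.

Lemma setI_coord_atom_path_event K a j x f : j \notin K ->
  lam j @^-1` [set x] `&` (atom lam K a `&` path_event lam f) =
  atom lam (j :: K) (fwith j x a) `&` path_event lam (fun h => f (fwith j x h)).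
Proof.
move=> jK; rewrite [atom _ (j :: K) _]/atom big_cons /= eqxx.
rewrite -[\big[_/_]_(_ <- K) _]/(atom lam K _) atom_fwith //.
by rewrite setICA setI_coord_path_event setICA setIA.
Qed.

Lemma determined_by_nil {f} :
  determined_by [::] f -> path_event lam f = setT \/ path_event lam f = set0.
Proof.
move=> df; have [[h fh]|nf] := pselect (exists h, f h); [left|right].
- by apply/seteqP; split=> // w _; apply: (df h) fh.
- by apply/seteqP; split=> // w fw; apply: nf; exists (lam^~ w).
Qed.

Lemma coord_partition j E :
  E = \big[setU/set0]_(x <- undup vals) (lam j @^-1` [set x] `&` E).
Proof.
rewrite -bigcup_seq; apply/seteqP; split=> [w Ew|]; last first.
  by apply: bigcup_sub => x _ w [].
by exists (lam j w) => //=; rewrite mem_undup.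
Qed.

Lemma measurable_path_event {J f} : determined_by J f -> measurable (path_event lam f).
Proof.
elim: J f => [|j J IH] f df; first by case: (determined_by_nil df) => ->.
rewrite (coord_partition j (path_event lam f)); apply: bigsetU_measurable => x _.
rewrite setI_coord_path_event; apply: measurableI => //.
exact: IH (determined_by_fwith _ df).
Qed.

Lemma pr_coord_partition j E : measurable E ->
  pr E = \sum_(x <- undup vals) pr (lam j @^-1` [set x] `&` E).
Proof.
move=> mE; rewrite {1}(coord_partition j E) pr_bigsetU ?undup_uniq //.
- by move=> x; apply: measurableI.
- move=> x y xy; apply/seteqP; split=> // w [[/= xw _] [/= yw _]].
  by move: xy; rewrite -xw -yw eqxx.
Qed.

Lemma pr_atom_cons j K a : uniq (j :: K) ->
  pr (atom lam (j :: K) a) = pr (lam j @^-1` [set a j]) * pr (atom lam K a).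
Proof.
move=> u; have /andP[_ uK] := u.
have := lam_indep _ a u; rewrite big_cons -lam_indep //.
have mK := measurable_atom K a; have mjK := measurable_atom (j :: K) a.
by rewrite !prE // -EFinM => -[].
Qed.

Lemma atom_nil a : atom lam [::] a = setT.
Proof. by rewrite /atom big_nil. Qed.

Lemma atom1 j a : atom lam [:: j] a = lam j @^-1` [set a j].
Proof. by rewrite /atom big_seq1. Qed.

Lemma pr_atomI_path_event {J f K a} : uniq J -> determined_by J f ->
  uniq K -> {in K, forall i, i \notin J} ->
  pr (atom lam K a `&` path_event lam f) = pr (atom lam K a) * pr (path_event lam f).
Proof.
elim: J f K a => [|j J IH] f K a uJ df uK KJ.
  by case: (determined_by_nil df) => ->; rewrite ?setIT ?setI0 ?prT ?pr0 ?mulr1 ?mulr0.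
case/andP: uJ => jJ uJ; have mf := measurable_path_event df.
pose S := \sum_(x <- undup vals)
  pr (lam j @^-1` [set x]) * pr (path_event lam (fun h => f (fwith j x h))).
(* The case [K' = [::]] identifies [S] with [pr (path_event lam f)]. *)
have expand K' a' : uniq K' -> {in K', forall i, i \notin j :: J} ->
    pr (atom lam K' a' `&` path_event lam f) = pr (atom lam K' a') * S.
  move=> uK' K'J; have jK' : j \notin K' by apply/negP => /K'J; rewrite mem_head.
  have mE := measurableI _ _ (measurable_atom K' a') mf.
  rewrite (pr_coord_partition j) // mulr_sumr.
  apply: eq_bigr => x _; rewrite setI_coord_atom_path_event // IH //.
  - by rewrite pr_atom_cons /= ?jK' // eqxx atom_fwith // -mulrA [RHS]mulrCA.
  - exact: determined_by_fwith.
  - by rewrite /= jK'.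
  - move=> i; rewrite inE => /orP[/eqP-> //|/K'J].
    by rewrite inE negb_or => /andP[].
rewrite (expand K a) //.
by have := expand [::] a isT; rewrite atom_nil setTI prT mul1r => ->.
Qed.

Lemma pr_coordI_path_event {J g j x} : uniq J -> determined_by J g -> j \notin J ->
  pr (lam j @^-1` [set x] `&` path_event lam g) =
  pr (lam j @^-1` [set x]) * pr (path_event lam g).
Proof.
move=> uJ dg jJ; rewrite -[lam j @^-1` _](atom1 j (fun=> x)).
by rewrite (pr_atomI_path_event uJ dg) // => i; rewrite inE => /eqP->.
Qed.

Lemma pr_path_event_coord {j J f} : uniq (j :: J) -> determined_by (j :: J) f ->
  pr (path_event lam f) = \sum_(x <- undup vals)
    pr (lam j @^-1` [set x]) * pr (path_event lam (fun h => f (fwith j x h))).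
Proof.
case/andP=> jJ uJ df.
rewrite (pr_coord_partition j); last exact: measurable_path_event df.
apply: eq_bigr => x _; rewrite setI_coord_path_event.
by rewrite (pr_coordI_path_event uJ (determined_by_fwith x df)).
Qed.

Lemma pr_path_eventI {J f J' g} : uniq J -> determined_by J f ->
  uniq J' -> determined_by J' g -> {in J, forall i, i \notin J'} ->
  pr (path_event lam f `&` path_event lam g) =
  pr (path_event lam f) * pr (path_event lam g).
Proof.
elim: J f J' g => [|j J IH] f J' g uJ df uJ' dg JJ'.
  by case: (determined_by_nil df) => ->; rewrite ?setTI ?set0I ?prT ?pr0 ?mul1r ?mul0r.
have /andP[jJ uJ0] := uJ.
have jJ' : j \notin J' by apply: JJ'; rewrite mem_head.
have mfg := measurableI _ _ (measurable_path_event df) (measurable_path_event dg).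
rewrite (pr_coord_partition j) // (pr_path_event_coord uJ df) big_distrl.
apply: eq_bigr => x _.
pose g' h := h j = x /\ g h.
have g'E : lam j @^-1` [set x] `&` path_event lam g = path_event lam g'.
  by apply/seteqP; split=> w.
rewrite setIA setI_coord_path_event -setIA setICA g'E (IH _ (j :: J') g') //.
- by rewrite -g'E (pr_coordI_path_event uJ') // mulrCA mulrA.
- exact: determined_by_fwith.
- by rewrite /= jJ'.
- move=> h h' hh' [hj gh]; split; first by rewrite -hh' ?mem_head.
  by apply: (dg h) => // i iJ'; apply: hh'; rewrite inE iJ' orbT.
- move=> i iJ; rewrite inE negb_or JJ' ?inE ?iJ ?orbT // andbT.
  by apply: contraNneq jJ => <-.
Qed.

End FiniteValuedProcess.

Definition window {V : Type} (k i : nat) (h : nat -> V) : seq V :=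
  [seq h (i + j)%N | j <- iota 0 k].

Lemma nth_window {V : Type} (x0 : V) k i h t : (t < k)%N ->
  nth x0 (window k i h) t = h (i + t)%N.
Proof. by move=> tk; rewrite (nth_map 0%N) ?size_iota // nth_iota. Qed.

Lemma determined_by_window {V : Type} k i (S : seq V -> Prop) :
  determined_by (iota i k) (fun h => S (window k i h)).
Proof.
move=> h h' hh'; congr S; apply/eq_in_map => j.
by rewrite mem_iota add0n => /andP[_ jk]; apply: hh'; rewrite mem_iota; lia.
Qed.

Section Pattern.
Variables (L k : nat).

Lemma nth_Wk_head {s} : Wk L k s -> nth (0, 0)%N s 0 = (1, 1)%N.
Proof. by case=> u [_ [_ ->]]. Qed.

Lemma nth_Wk_fst {s} t : Wk L k s -> (0 < t < k)%N -> (nth (0, 0)%N s t).1 = L.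
Proof.
case=> u [su [uL ->]]; case: t => [|[|t]] //= tk.
have tu : (t < size u)%N by rewrite su; lia.
by case: (uL _ (mem_nth (0, 0)%N tu)).
Qed.

Lemma Wk_window_overlap h i m : (1 < L)%N -> (i < m < i + k)%N ->
  Wk L k (window k i h) -> ~ Wk L k (window k m h).
Proof.
move=> L_gt1 /andP[im mik] Wi Wm.
have hm : h m = (1, 1)%N.
  by have := nth_Wk_head Wm; rewrite nth_window ?addn0 //; lia.
have := nth_Wk_fst (m - i) Wi; rewrite nth_window ?subnKC ?hm /=; lia.
Qed.

End Pattern.

Section PatternAvoidance.
Context {d : measure_display} {T : measurableType d} {R : realType}.
Context {P : probability T R} {lam : nat -> T -> nat * nat} {vals : seq (nat * nat)}.
Variables (L k : nat).
Hypothesis L_gt1 : (1 < L)%N.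
Hypothesis lam_vals : forall j w, lam j w \in vals.
Hypothesis measurable_lam : forall j x, measurable (lam j @^-1` [set x]).
Hypothesis lam_indep : mutually_independent_discrete P lam.

Local Notation A := (Aev L k lam).

Lemma measurable_Aev i : measurable (A i).
Proof.
exact: (measurable_path_event lam_vals measurable_lam
  (determined_by_window k i (Wk L k))).
Qed.

Lemma pr_bigcap_setC_Aev_sorted s : uniq s -> sorted geq s ->
  pr P (\big[setI/setT]_(i <- s) ~` A i) <= \prod_(i <- s) pr P (~` A i).
Proof.
elim: s => [|m s IH] /=; first by rewrite !big_nil prT.
case/andP=> m_s us /[dup] /path_sorted ss.
move/(order_path_min (rev_trans leq_trans))/allP => s_le_m.
have s_lt_m i : i \in s -> (i < m)%N.
  by move=> i_s; rewrite ltn_neqAle s_le_m ?andbT //; apply: contraNneq m_s => <-.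
rewrite !big_cons.
set B := \big[setI/setT]_(i <- s) ~` A i.
pose B' := \big[setI/setT]_(i <- s | (i + k <= m)%N) ~` A i.
have mB : measurable B.
  by apply: bigsetI_measurable => i _; apply/measurableC/measurable_Aev.
have mB' : measurable B'.
  by apply: bigsetI_measurable => i _; apply/measurableC/measurable_Aev.
have BB' : B `<=` B'.
  by rewrite /B /B' -bigcap_seq -bigcap_seq_cond => w Bw i /andP[i_s _]; apply: Bw.
have AB : A m `&` B = A m `&` B'.
  apply/seteqP; split=> w [Am Bw]; split=> //; first exact: BB'.
  move: Bw; rewrite /B /B' -bigcap_seq -bigcap_seq_cond => Bw i /= i_s Ai.
  have [ikm|mik] := leqP (i + k) m; first by apply: (Bw i) => //; rewrite /= i_s.
  by apply: (Wk_window_overlap _ _ (lam^~ w) i m L_gt1 _ Ai Am); rewrite mik s_lt_m.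
pose g h := forall i, (i \in s) && (i + k <= m)%N -> ~ Wk L k (window k i h).
have B'E : B' = path_event lam g by rewrite /B' -bigcap_seq_cond.
have dg : determined_by (iota 0 m) g.
  move=> h h' hh' gh i /andP[i_s ikm] Wi; apply: (gh i); first by rewrite i_s.
  apply: (determined_by_window k i _ h') Wi => j; rewrite mem_iota => jik.
  by rewrite hh' // mem_iota; lia.
have AB' : pr P (A m `&` B') = pr P (A m) * pr P B'.
  rewrite B'E (pr_path_eventI lam_vals measurable_lam lam_indep (iota_uniq m k)
    (determined_by_window k m _) (iota_uniq 0 m) dg) // => i.
  by rewrite !mem_iota; lia.
apply: le_trans (pr_setCI_le P (measurable_Aev m) mB mB' BB' AB AB') _.
by rewrite ler_wpM2l ?pr_ge0 ?IH.
Qed.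

End PatternAvoidance.

Local Open Scope ereal_scope.

Theorem lemma4p15 (d : measure_display) (T : measurableType d) (R : realType)
  (P : probability T R) (L k : nat) (lam : nat -> T -> nat * nat) :
  (2 <= L)%N -> (2 <= k)%N ->
  (forall m w, Lam L (lam m w)) ->
  (forall m x, measurable (lam m @^-1` [set x])) ->
  mutually_independent_discrete P lam ->
  forall I : seq nat, uniq I ->
    P (\big[setI/setT]_(i <- I) ~` Aev L k lam i)
    <= \prod_(i <- I) P (~` Aev L k lam i).
Proof.
move=> L_gt1 _ lam_Lam measurable_lam lam_indep I uI.
have lam_vals j w : lam j w \in [seq (a, b) | a <- iota 1 L, b <- iota 1 L].
  case: (lam_Lam j w); case: (lam j w) => a b /= aL bL.
  by apply/allpairsP; exists (a, b); rewrite !mem_iota; split=> //=; lia.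
have mA i := measurable_Aev L k lam_vals measurable_lam i.
have sortI : perm_eq (sort geq I) I by rewrite perm_sort.
rewrite -!(perm_big _ sortI) prE; last first.
  by apply: bigsetI_measurable => i _; apply/measurableC/mA.
rewrite (eq_bigr (fun i => (pr P (~` Aev L k lam i))%:E)); last first.
  by move=> i _; apply/prE/measurableC/mA.
rewrite prodEFin lee_fin.
apply: (pr_bigcap_setC_Aev_sorted L k L_gt1 lam_vals measurable_lam lam_indep).
- by rewrite sort_uniq.
- by apply: sort_sorted => a b; exact: leq_total.
Qed.
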